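(* Let $\pi_1,\dots,\pi_n,\pi_{n+1}\ge 0$ with $\pi_i>0$ for some $i\le n$, and let $\boldsymbol P\in\mathcal R_{n+1}$ with $0<\Pr[P_{n+1}=0]<1$. Define the active-administrator compensations $W_i^{\mathrm{active}}=\big(\sum_{j=1}^{n+1}\pi_j\big)P_i$ for $i=1,\dots,n+1$, and the passive-administrator compensations (for the investment vector $(\pi_1,\dots,\pi_n,0)$) $W_i^{\mathrm{passive}}=\big(\sum_{j=1}^{n}\pi_j\big)P_i+\pi_iP_{n+1}$ for $i=1,\dots,n$. Then the following are equivalent: (a) $\pi_i=E[W_i^{\mathrm{active}}]$ for $i=1,\dots,n$; (b) $\pi_i=E[W_i^{\mathrm{passive}}]$ for $i=1,\dots,n$, and $\pi_{n+1}=E[W_{n+1}^{\mathrm{active}}]$.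
   Context: All random variables live on a probability space $(\Omega,\mathcal F,\Pr)$; $L^0_+$ denotes the non-negative random variables. The set of relative compensation vectors is $$\mathcal R_{n+1}=\Big\{(P_1,\dots,P_{n+1})\in (L^0_+)^{n+1}:\ \sum_{j=1}^{n+1}P_j=1,\ P_{n+1}=\mathbf 1\Big(\sum_{j=1}^nP_j=0\Big)\Big\},$$ where $\mathbf 1(A)$ denotes the indicator of the event $A$. *)

From HB Require Import structures.
From mathcomp Require Import all_boot all_order all_algebra.
From mathcomp Require Import all_classical all_reals all_analysis.
Set Implicit Arguments. Unset Strict Implicit. Unset Printing Implicit Defensive.
Import Order.TTheory GRing.Theory Num.Theory.
Local Open Scope ring_scope.

(* Relative compensation vectors R_{n+1}: components indexed by 'I_n.+1,
   the last index (ord_max, value n) playing the role of P_{n+1}.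
   Elements of L^0_+ are measurable, a.s. nonnegative; the identities hold a.s.
   (equality in L^0). *)
Definition rel_comp {d} {T : measurableType d} {R : realType}
    (Pr : probability T R) (n : nat) (P : 'I_n.+1 -> T -> R) : Prop :=
  (forall j, measurable_fun setT (P j)) /\
  (forall j, {ae Pr, forall w, 0 <= P j w}) /\
  {ae Pr, forall w, \sum_(j < n.+1) P j w = 1} /\
  {ae Pr, forall w,
     P ord_max w = ((\sum_(j < n.+1 | (j < n)%N) P j w) == 0)%:R}.

From HB Require Import structures.
From mathcomp Require Import all_boot all_order all_algebra.
From mathcomp Require Import all_classical all_reals all_analysis.
From mathcomp Require Import measurable_realfun.
From mathcomp Require Import ring.
Import Order.TTheory GRing.Theory Num.Theory.
Local Open Scope ring_scope.

(* Write e_j = E[P_j].  Then sum_j e_j = 1 and e_{n+1} = 1 - Pr[P_{n+1} = 0] < 1,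
   and by linearity both fairness conditions become linear equations in the
   e_j.  With S = sum_j pi_j and S' = sum_{j<=n} pi_j, condition (a) sums to
   S' = S (1 - e_{n+1}), which is exactly pi_{n+1} = S e_{n+1}; given this,
   the passive condition pi_i (1 - e_{n+1}) = S' e_i is (a) multiplied by the
   nonzero factor 1 - e_{n+1}. *)

Section ae_bounded_expectation.
Context {d} {T : measurableType d} {R : realType} {Pr : probability T R}.

Lemma Lfun1_ae_bounded (X : T -> R) (M : R) : measurable_fun setT X ->
  {ae Pr, forall w, `|X w| <= M} -> X \in Lfun Pr 1.
Proof.
move=> mX bX; apply/Lfun1_integrable/integrableP; split.
  exact/measurable_EFinP.
apply: (@le_lt_trans _ _ (\int[Pr]_(x in setT) (cst `|M|%:E x))%E).
  apply: ae_ge0_le_integral => //.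
  - by do 2 apply: measurableT_comp => //.
  - by move=> x _; rewrite lee_fin.
  - by apply: filterS bX => w h _ /=; rewrite lee_fin (le_trans h) // ler_norm.
by rewrite integral_cst //= probability_setT mule1 ltry.
Qed.

Lemma expectation_ae_eq (X Y : T -> R) :
  measurable_fun setT X -> measurable_fun setT Y ->
  {ae Pr, forall w, X w = Y w} -> 'E_Pr[X]%E = 'E_Pr[Y]%E.
Proof.
move=> mX mY XY; rewrite unlock; apply: ae_eq_integral => //.
- exact/measurable_EFinP.
- exact/measurable_EFinP.
- by apply: filterS XY => w -> _.
Qed.

End ae_bounded_expectation.

Section relative_compensation.
Context {d} {T : measurableType d} {R : realType} {Pr : probability T R}.
Context {n : nat} {P : 'I_n.+1 -> T -> R}.
Hypothesis relP : rel_comp Pr P.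

Lemma rel_comp_measurable j : measurable_fun setT (P j).
Proof. by case: relP. Qed.

Lemma rel_comp_ae_ge0 : {ae Pr, forall w k, 0 <= P k w}.
Proof.
have [_ [P0 _]] := relP.
suff all_ge0 (s : seq 'I_n.+1) : {ae Pr, forall w k, k \in s -> 0 <= P k w}.
  by apply: filterS (all_ge0 (enum 'I_n.+1)) => w h k; apply: h; rewrite mem_enum.
elim: s => [|k s IH]; first by apply: aeW => w k; rewrite in_nil.
apply: filterS2 (P0 k) IH => w Pk0 Ps0 j; rewrite inE => /orP[/eqP->//|].
exact: Ps0.
Qed.

Lemma rel_comp_Lfun1 j : P j \in Lfun Pr 1.
Proof.
have [_ [_ [Psum _]]] := relP.
apply: (Lfun1_ae_bounded _ 1); first exact: rel_comp_measurable.
apply: filterS2 rel_comp_ae_ge0 Psum => w P0 P1.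
by rewrite ger0_norm // -P1 (bigD1 j) //= lerDl sumr_ge0.
Qed.

Lemma rel_comp_LfunZ (a : R) (j : 'I_n.+1) : (fun w => a * P j w) \in Lfun Pr 1.
Proof.
have -> : (fun w => a * P j w) = a \o* P j by apply/funext => w /=; rewrite mulrC.
by rewrite Lfun_scale // rel_comp_Lfun1.
Qed.

Lemma rel_comp_expectationE (j : 'I_n.+1) : 'E_Pr[P j]%E = (fine 'E_Pr[P j])%:E.
Proof. by rewrite fineK // expectation_fin_num // rel_comp_Lfun1. Qed.

Lemma expectation_rel_compZ (a : R) (j : 'I_n.+1) :
  'E_Pr[fun w => (a * P j w)%R]%E = (a * fine 'E_Pr[P j])%:E.
Proof.
rewrite EFinM -rel_comp_expectationE -expectationZl ?rel_comp_Lfun1 //.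
by congr expectation; apply/funext => w /=; rewrite mulrC.
Qed.

Lemma expectation_rel_compD (a b : R) (i j : 'I_n.+1) :
  'E_Pr[fun w => (a * P i w + b * P j w)%R]%E =
  (a * fine 'E_Pr[P i] + b * fine 'E_Pr[P j])%:E.
Proof.
by rewrite EFinD -!expectation_rel_compZ -expectationD // rel_comp_LfunZ.
Qed.

Lemma rel_comp_sum_mean : \sum_(j < n.+1) fine 'E_Pr[P j] = 1.
Proof.
have [_ [_ [Psum _]]] := relP.
apply: EFin_inj; rewrite -sumEFin.
under eq_bigr do rewrite -rel_comp_expectationE.
transitivity 'E_Pr[fun w => (\sum_(j < n.+1) P j w)%R]%E.
  rewrite expectation.unlock -integral_sum //; last first.
    by move=> j; apply/Lfun1_integrable/rel_comp_Lfun1.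
  by apply: eq_integral => w _; rewrite sumEFin.
rewrite (expectation_ae_eq _ (cst 1)) ?expectation_cst //.
exact/measurable_sum/rel_comp_measurable.
Qed.

Lemma rel_comp_prob_last_eq0 :
  Pr [set w | P ord_max w = 0]%classic = (1 - fine 'E_Pr[P ord_max])%:E.
Proof.
have [_ [_ [_ Pmax]]] := relP.
set A := [set w | P ord_max w = 0]%classic.
have mA : measurable A.
  have := rel_comp_measurable ord_max measurableT _ (measurable_set1 (0 : R)).
  by rewrite setTI.
have indicA_lfun : \1_A \in Lfun Pr 1.
  apply: (Lfun1_ae_bounded _ 1); first exact/measurable_indic.
  by apply: aeW => w; rewrite indicE; case: (w \in A); rewrite ?normr1 ?normr0.
have indicA_add : {ae Pr, forall w, (\1_A \+ P ord_max) w = cst 1 w}.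
  apply: filterS Pmax => w; rewrite /= indicE.
  case: (_ == 0) => /= Pw.
  + by rewrite memNset ?Pw ?add0r // /A /= Pw; exact/eqP/oner_neq0.
  + by rewrite mem_set ?Pw ?addr0.
have mindicA_add : measurable_fun setT (\1_A \+ P ord_max).
  by apply: measurable_funD; [exact/measurable_indic | exact: rel_comp_measurable].
have := expectation_ae_eq _ _ mindicA_add (measurable_cst _) indicA_add.
rewrite expectationD ?rel_comp_Lfun1 // expectation_indic // expectation_cst.
by rewrite rel_comp_expectationE EFinB => <-; rewrite addeK.
Qed.

End relative_compensation.

Lemma EFin_eq_iff (R : numDomainType) (x y : R) : x%:E = y%:E <-> x = y.
Proof. by split=> [xy|->]; [exact: EFin_inj|]. Qed.

Lemma sum_ord_max_split (V : nmodType) n (f : 'I_n.+1 -> V) :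
  \sum_(j < n.+1) f j = f ord_max + \sum_(j < n.+1 | (j < n)%N) f j.
Proof.
rewrite (bigD1 ord_max) //=; congr (_ + _); apply: eq_bigl => j.
by rewrite -(inj_eq val_inj) /= ltn_neqAle leq_ord andbT.
Qed.

Lemma fair_active_iff_passive (F : fieldType) n (pi e : 'I_n.+1 -> F) :
  \sum_(j < n.+1) e j = 1 -> e ord_max != 1 ->
  (forall i : 'I_n.+1, (i < n)%N -> pi i = (\sum_(j < n.+1) pi j) * e i) <->
  ((forall i : 'I_n.+1, (i < n)%N ->
      pi i = (\sum_(j < n.+1 | (j < n)%N) pi j) * e i + pi i * e ord_max) /\
   pi ord_max = (\sum_(j < n.+1) pi j) * e ord_max).
Proof.
move=> esum emax_neq1.
have lower_mass : \sum_(j < n.+1 | (j < n)%N) e j = 1 - e ord_max.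
  by rewrite -esum sum_ord_max_split addrC addrK.
have lower_mass_neq0 : 1 - e ord_max != 0 by rewrite subr_eq0 eq_sym.
set S' := \sum_(j < n.+1 | (j < n)%N) pi j.
have S'E : S' = \sum_(j < n.+1 | (j < n)%N) pi j by [].
set S := \sum_(j < n.+1) pi j.
have SE : S = pi ord_max + S' by rewrite /S sum_ord_max_split.
clearbody S S'; split=> [fair_a | [fair_p fair_last]].
- have S'_eq : S' = S * (1 - e ord_max).
    by rewrite -lower_mass mulr_sumr S'E; apply: eq_bigr => i; exact: fair_a.
  split=> [i ltin|]; first by rewrite S'_eq (fair_a i ltin); ring.
  have -> : pi ord_max = S - S' by rewrite SE; ring.
  by rewrite S'_eq; ring.
- have S'_eq : S' = S * (1 - e ord_max) by rewrite mulrBr mulr1 -fair_last SE; ring.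
  move=> i ltin; apply/eqP; rewrite -subr_eq0.
  have : (pi i - S * e i) * (1 - e ord_max) = pi i - (S' * e i + pi i * e ord_max).
    by rewrite S'_eq; ring.
  by rewrite -fair_p // subrr => /eqP; rewrite mulf_eq0 (negPf lower_mass_neq0) orbF.
Qed.

Theorem corollary1 (d : measure_display) (T : measurableType d) (R : realType)
  (Pr : probability T R) (n : nat) (pi : 'I_n.+1 -> R)
  (P : 'I_n.+1 -> T -> R) :
  (forall j, 0 <= pi j) ->
  (exists i : 'I_n.+1, (i < n)%N /\ 0 < pi i) ->
  rel_comp Pr P ->
  (0 < Pr [set w : T | P ord_max w = 0%R]%classic < 1)%E ->
  let W_active (i : 'I_n.+1) := fun w => (\sum_(j < n.+1) pi j) * P i w in
  let W_passive (i : 'I_n.+1) := fun w =>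
    (\sum_(j < n.+1 | (j < n)%N) pi j) * P i w + pi i * P ord_max w in
  (forall i : 'I_n.+1, (i < n)%N -> (pi i)%:E = ('E_Pr[W_active i])%E) <->
  ((forall i : 'I_n.+1, (i < n)%N -> (pi i)%:E = ('E_Pr[W_passive i])%E) /\
   (pi ord_max)%:E = ('E_Pr[W_active ord_max])%E).
Proof.
move=> _ _ relP /andP[PrA_gt0 _] W_active W_passive.
pose e j := fine 'E_Pr[P j].
have emax_neq1 : e ord_max != 1.
  by move: PrA_gt0; rewrite rel_comp_prob_last_eq0 // lte_fin subr_gt0 => /lt_eqF ->.
have E_active i : 'E_Pr[W_active i]%E = ((\sum_(j < n.+1) pi j) * e i)%:E.
  exact: expectation_rel_compZ.
have E_passive i : 'E_Pr[W_passive i]%E =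
    ((\sum_(j < n.+1 | (j < n)%N) pi j) * e i + pi i * e ord_max)%:E.
  exact: expectation_rel_compD.
setoid_rewrite E_active; setoid_rewrite E_passive.
setoid_rewrite EFin_eq_iff.
exact: fair_active_iff_passive (rel_comp_sum_mean relP) emax_neq1.
Qed.
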